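(* Let $\mathscr{H}$ be a complex Hilbert space and let $N(\cdot)$ be a norm on $\mathbb{B}(\mathscr{H})$ which is an algebra norm ($N(XY)\leq N(X)N(Y)$ for all $X,Y$) and self-adjoint ($N(X^* )=N(X)$ for all $X$). Then for every $T\in\mathbb{B}(\mathscr{H})$, $$\frac1{16}N(T^*T+TT^* )+\frac12\max\{N(\Re T),N(\Im T)\}\,|N(\Re T+\Im T)-N(\Re T-\Im T)|\leq w_N^2(T).$$
   Context: For $T\in\mathbb{B}(\mathscr{H})$: $\Re(T)=\frac12(T+T^* )$, $\Im(T)=\frac1{2i}(T-T^* )$, and $w_N(T)=\sup_{\theta\in\mathbb{R}}N(\Re(e^{i\theta}T))$. *)

From mathcomp Require Import all_boot all_order all_algebra.
From mathcomp Require Import all_classical all_reals all_analysis.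
From mathcomp Require Export complex.
Import GRing.Theory Num.Theory.
Local Open Scope ring_scope.
Local Open Scope complex_scope.
Local Open Scope classical_set_scope.

Set Implicit Arguments.
Unset Strict Implicit.
Unset Printing Implicit Defensive.

Section Hilbert.
Variables (R : realType) (V : lmodType R[i]) (ip : V -> V -> R[i]).

Definition cabs (a : R[i]) : R := complex.Re `|a|.

Definition hnorm (x : V) : R := Num.sqrt (complex.Re (ip x x)).

Definition is_hilbert : Prop :=
  [/\ (forall (a : R[i]) (x y z : V), ip (a *: x + y) z = a * ip x z + ip y z),
      (forall x y : V, ip y x = (ip x y)^*),
      (forall x : V, 0 <= ip x x),
      (forall x : V, ip x x = 0 -> x = 0)
    & (forall u : nat -> V,
         (forall e : R, 0 < e -> exists M : nat, forall m n : nat,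
              (M <= m)%N -> (M <= n)%N -> hnorm (u m - u n) < e) ->
         exists v : V, forall e : R, 0 < e -> exists M : nat, forall n : nat,
              (M <= n)%N -> hnorm (u n - v) < e)].

Definition bounded_op (T : V -> V) : Prop :=
  (forall (a : R[i]) (x y : V), T (a *: x + y) = a *: T x + T y) /\
  exists M : R, forall x : V, hnorm (T x) <= M * hnorm x.

Definition is_adjoint (T S : V -> V) : Prop :=
  forall x y : V, ip (T x) y = ip x (S y).

Definition opadd (X Y : V -> V) : V -> V := fun x => X x + Y x.
Definition opsub (X Y : V -> V) : V -> V := fun x => X x - Y x.
Definition opscale (a : R[i]) (X : V -> V) : V -> V := fun x => a *: X x.
Definition opcomp (X Y : V -> V) : V -> V := fun x => X (Y x).

Definition is_norm_BH (N : (V -> V) -> R) : Prop :=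
  [/\ (forall X, bounded_op X -> (N X = 0 <-> X = (fun _ => 0))),
      (forall a X, bounded_op X -> N (opscale a X) = cabs a * N X)
    & (forall X Y, bounded_op X -> bounded_op Y -> N (opadd X Y) <= N X + N Y)].

Definition algebra_norm (N : (V -> V) -> R) : Prop :=
  forall X Y, bounded_op X -> bounded_op Y -> N (opcomp X Y) <= N X * N Y.

Definition selfadjoint_norm (N : (V -> V) -> R) : Prop :=
  forall X Xs, bounded_op X -> is_adjoint X Xs -> N Xs = N X.

Definition ReOp (T Ts : V -> V) : V -> V := opscale (2^-1) (opadd T Ts).
Definition ImOp (T Ts : V -> V) : V -> V := opscale ((2 * 'i)^-1) (opsub T Ts).

Definition expi (t : R) : R[i] := cos t +i* sin t.

(* w_N(T) = sup_theta N(Re(e^{i theta} T)); the adjoint of e^{i theta} T is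
   e^{-i theta} T^* = (e^{i theta})^* T^* *)
Definition wN (N : (V -> V) -> R) (T Ts : V -> V) : R :=
  sup [set N (ReOp (opscale (expi t) T) (opscale (expi t)^* Ts)) | t in [set: R]].

End Hilbert.

From mathcomp Require Import all_boot all_order all_algebra.
From mathcomp Require Import all_classical all_reals all_analysis.
From mathcomp Require Import complex.
From mathcomp Require Import ring lra.
Import Order.TTheory GRing.Theory Num.Theory.
Local Open Scope ring_scope.
Local Open Scope complex_scope.

Set Implicit Arguments.
Unset Strict Implicit.

(* Write A = Re T and B = Im T.  Since Re(e^{it} T) = cos t A - sin t B, the
   angles t = 0, -pi/2, -pi/4, pi/4 give N(A), N(B) <= w_N(T) and
   N(A + B), N(A - B) <= sqrt 2 w_N(T).  Moreover T^*T + TT^* = 2 (A^2 + B^2),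
   so the algebra-norm property gives N(T^*T + TT^* ) <= 2 (N(A)^2 + N(B)^2)
   <= 4 w_N(T)^2.  The left-hand side is therefore at most
   (1/4 + 1/sqrt 2) w_N(T)^2 <= w_N(T)^2. *)

Section ComplexFacts.
Variable R : realType.

Lemma complex_eqE (a b : R[i]) :
  complex.Re a = complex.Re b -> complex.Im a = complex.Im b -> a = b.
Proof. by case: a b => ? ? [? ?] /= -> ->. Qed.

Lemma real_complexV2 : (2^-1 : R[i]) = (2^-1 : R)%:C.
Proof. by rewrite fmorphV rmorph_nat. Qed.

Lemma invc_2i : (2 * 'i)^-1 = 0 +i* (- 2^-1) :> R[i].
Proof.
have i2_neq0 : (2 * 'i : R[i]) != 0.
  rewrite mulf_neq0 ?pnatr_eq0 //.
  by apply/eqP => /(congr1 (@complex.Im R)) /= /eqP; rewrite oner_eq0.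
apply: (mulIf i2_neq0); rewrite mulVf // -(rmorph_nat (real_complex R)).
by apply: complex_eqE => /=; lra.
Qed.

Lemma cabsE (z : R[i]) :
  cabs z = Num.sqrt (complex.Re z ^+ 2 + complex.Im z ^+ 2).
Proof. by rewrite /cabs normc_def. Qed.

Lemma cabs_ge0 (z : R[i]) : 0 <= cabs z.
Proof. by rewrite cabsE sqrtr_ge0. Qed.

Lemma cabs_real (x : R) : cabs x%:C = `|x|.
Proof. by rewrite cabsE /= expr0n addr0 sqrtr_sqr. Qed.

Lemma cabs_conj (z : R[i]) : cabs z^* = cabs z.
Proof. by rewrite /cabs normcJ. Qed.

Lemma cabs_expi (t : R) : cabs (expi t) = 1.
Proof. by rewrite cabsE /= cos2Dsin2 sqrtr1. Qed.

Lemma sin_pi4 : sin (pi / 4) = cos (pi / 4 : R).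
Proof. by rewrite -cosBpihalf -cosN; congr cos; lra. Qed.

Lemma sqr_cos_pi4 : cos (pi / 4 : R) ^+ 2 = 2^-1.
Proof. by have := cos2Dsin2 (pi / 4 : R); rewrite sin_pi4; lra. Qed.

Lemma cos_pi4_gt0 : 0 < cos (pi / 4 : R).
Proof. by apply: cos_gt0_pihalf; have := pi_gt0 R => ?; apply/andP; split; lra. Qed.

Lemma cos_pi4_mul_le (p w : R) :
  0 <= p -> cos (pi / 4) * p <= w -> p ^+ 2 <= 2 * w ^+ 2.
Proof.
move=> p0 cpw; have c0 := cos_pi4_gt0.
have cp0 : 0 <= cos (pi / 4) * p := mulr_ge0 (ltW c0) p0.
have : (cos (pi / 4) * p) ^+ 2 <= w ^+ 2.
  by rewrite ler_sqr ?nnegrE ?(le_trans cp0 cpw).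
by rewrite exprMn sqr_cos_pi4; lra.
Qed.

End ComplexFacts.

Lemma sixteenth_add_half_max_dist_le (R : realFieldType) (S a b p m w : R) :
  0 <= a <= w -> 0 <= b <= w -> 0 <= p -> 0 <= m ->
  p ^+ 2 <= 2 * w ^+ 2 -> m ^+ 2 <= 2 * w ^+ 2 -> S <= 2 * (a ^+ 2 + b ^+ 2) ->
  16^-1 * S + 2^-1 * Num.max a b * `|p - m| <= w ^+ 2.
Proof.
move=> /andP[a0 aw] /andP[b0 bw] p0 m0 pw mw Sab.
have w0 : 0 <= w := le_trans a0 aw.
have p_le : p <= 3 / 2 * w by nra.
have m_le : m <= 3 / 2 * w by nra.
have dist_le : `|p - m| <= 3 / 2 * w.
  by rewrite ler_norml; apply/andP; split; lra.
have max_le : Num.max a b <= w by rewrite ge_max aw bw.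
have max_ge0 : 0 <= Num.max a b by rewrite le_max a0.
have : Num.max a b * `|p - m| <= w * (3 / 2 * w) by apply: ler_pM.
by nra.
Qed.

Lemma linear_axiomZ (K : pzRingType) (U W : lmodType K) (F : U -> W) :
  (forall a x y, F (a *: x + y) = a *: F x + F y) ->
  forall a x, F (a *: x) = a *: F x.
Proof.
move=> linF a x; have F0 : F 0 = 0.
  by have := linF 1 0 0; rewrite !scale1r addr0 -{1}[F 0]addr0 => /addrI/esym.
by rewrite -[a *: x]addr0 linF F0 addr0.
Qed.

Section HilbertSpace.
Variables (R : realType) (V : lmodType R[i]) (ip : V -> V -> R[i]).
Hypothesis hH : is_hilbert ip.

Lemma ip_linear a x y z : ip (a *: x + y) z = a * ip x z + ip y z.
Proof. by case: hH. Qed.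

Lemma ip_conj x y : ip y x = (ip x y)^*.
Proof. by case: hH. Qed.

Lemma ip_ge0 x : 0 <= ip x x.
Proof. by case: hH. Qed.

Lemma ip_eq0 x : ip x x = 0 -> x = 0.
Proof. by case: hH => _ _ _ /(_ x). Qed.

Lemma ip0l z : ip 0 z = 0.
Proof.
have := ip_linear 1 0 0 z; rewrite scale1r addr0 mul1r -{1}[ip 0 z]addr0.
by move/addrI/esym.
Qed.

Lemma ipDl x y z : ip (x + y) z = ip x z + ip y z.
Proof. by have := ip_linear 1 x y z; rewrite scale1r mul1r. Qed.

Lemma ipZl a x z : ip (a *: x) z = a * ip x z.
Proof. by rewrite -[a *: x]addr0 ip_linear ip0l addr0. Qed.

Lemma ip0r x : ip x 0 = 0.
Proof. by rewrite ip_conj ip0l conjc0. Qed.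

Lemma ipDr x y z : ip x (y + z) = ip x y + ip x z.
Proof. by rewrite ![ip x _]ip_conj ipDl rmorphD. Qed.

Lemma ipZr a x y : ip x (a *: y) = a^* * ip x y.
Proof. by rewrite ![ip x _]ip_conj ipZl rmorphM. Qed.

Lemma ipBr x y z : ip x (y - z) = ip x y - ip x z.
Proof. by rewrite -[- z]scaleN1r ipDr ipZr rmorphN1 mulN1r. Qed.

Lemma ip_injr u v : (forall z, ip z u = ip z v) -> u = v.
Proof.
move=> huv; apply/eqP; rewrite -subr_eq0; apply/eqP/ip_eq0.
by rewrite ipBr huv subrr.
Qed.

Lemma Re_ip_ge0 x : 0 <= complex.Re (ip x x).
Proof. by have := ip_ge0 x; rewrite lecE => /andP[]. Qed.

Lemma hnorm_ge0 x : 0 <= hnorm ip x.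
Proof. exact: sqrtr_ge0. Qed.

Lemma sqr_hnorm x : hnorm ip x ^+ 2 = complex.Re (ip x x).
Proof. by rewrite sqr_sqrtr // Re_ip_ge0. Qed.

Lemma hnorm_eq0 x : hnorm ip x = 0 -> x = 0.
Proof.
move=> /eqP; rewrite sqrtr_eq0 => Re_le0; apply: ip_eq0.
apply: complex_eqE; last exact: ger0_Im (ip_ge0 x).
by apply/eqP; rewrite /= eq_le Re_le0 Re_ip_ge0.
Qed.

Lemma Re_ip_lincomb (s t : R) x y :
  complex.Re (ip (s%:C *: x + t%:C *: y) (s%:C *: x + t%:C *: y)) =
  s ^+ 2 * hnorm ip x ^+ 2 + 2 * s * t * complex.Re (ip x y)
  + t ^+ 2 * hnorm ip y ^+ 2.
Proof.
rewrite !sqr_hnorm !ipDl !ipDr !ipZl !ipZr (ip_conj x y).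
by move: (ip x x) (ip x y) (ip y y) => [? ?] [? ?] [? ?] /=; ring.
Qed.

(* Cauchy-Schwarz, from the positivity of |b x - a y|^2 with a = |x|, b = |y|. *)
Lemma Re_ip_le x y : complex.Re (ip x y) <= hnorm ip x * hnorm ip y.
Proof.
have [x0 | x_neq0] := eqVneq (hnorm ip x) 0.
  by rewrite x0 mul0r (hnorm_eq0 x0) ip0l.
have [y0 | y_neq0] := eqVneq (hnorm ip y) 0.
  by rewrite y0 mulr0 (hnorm_eq0 y0) ip0r.
have xy_gt0 : 0 < hnorm ip x * hnorm ip y.
  by rewrite mulr_gt0 // lt0r ?x_neq0 ?y_neq0 hnorm_ge0.
have := Re_ip_ge0 ((hnorm ip y)%:C *: x + (- hnorm ip x)%:C *: y).
rewrite Re_ip_lincomb; nra.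
Qed.

Lemma hnormD x y : hnorm ip (x + y) <= hnorm ip x + hnorm ip y.
Proof.
rewrite -ler_sqr ?nnegrE ?addr_ge0 ?hnorm_ge0 //.
have := Re_ip_lincomb 1 1 x y; rewrite rmorph1 !scale1r -sqr_hnorm => ->.
by have := Re_ip_le x y; nra.
Qed.

Lemma hnormZ a x : hnorm ip (a *: x) = cabs a * hnorm ip x.
Proof.
rewrite /hnorm ipZl ipZr cabsE -sqrtrM ?addr_ge0 ?sqr_ge0 //; congr Num.sqrt.
have := ger0_Im (ip_ge0 x).
by case: (ip x x) => p q /= ->; case: a => a1 a2 /=; ring.
Qed.

Lemma bounded_opadd X Y :
  bounded_op ip X -> bounded_op ip Y -> bounded_op ip (opadd X Y).
Proof.
move=> [linX [M1 hM1]] [linY [M2 hM2]]; split.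
  by move=> a x y; rewrite /opadd linX linY scalerDr addrACA.
exists (M1 + M2) => x; rewrite /opadd mulrDl.
exact: le_trans (hnormD _ _) (lerD (hM1 x) (hM2 x)).
Qed.

Lemma bounded_opscale a X : bounded_op ip X -> bounded_op ip (opscale a X).
Proof.
move=> [linX [M hM]]; split.
  by move=> b x y; rewrite /opscale linX scalerDr !scalerA mulrC.
exists (cabs a * M) => x; rewrite /opscale hnormZ -mulrA.
by rewrite ler_wpM2l ?cabs_ge0 ?hM.
Qed.

Lemma bounded_opsub X Y :
  bounded_op ip X -> bounded_op ip Y -> bounded_op ip (opsub X Y).
Proof.
move=> hX hY; have -> : opsub X Y = opadd X (opscale (-1) Y).
  by apply: funext => v; rewrite /opadd /opscale scaleN1r.
exact/bounded_opadd/bounded_opscale.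
Qed.

Lemma bounded_opcomp X Y :
  bounded_op ip X -> bounded_op ip Y -> bounded_op ip (opcomp X Y).
Proof.
move=> [linX [M1 hM1]] [linY [M2 hM2]]; split.
  by move=> a x y; rewrite /opcomp linY linX.
exists (`|M1| * M2) => x; rewrite /opcomp -mulrA.
apply: le_trans (hM1 _) (le_trans (ler_wpM2r (hnorm_ge0 _) (ler_norm M1)) _).
by rewrite ler_wpM2l ?hM2.
Qed.

Lemma bounded_ReOp X Xs :
  bounded_op ip X -> bounded_op ip Xs -> bounded_op ip (ReOp X Xs).
Proof. by move=> hX hXs; apply/bounded_opscale/bounded_opadd. Qed.

Lemma bounded_ImOp X Xs :
  bounded_op ip X -> bounded_op ip Xs -> bounded_op ip (ImOp X Xs).
Proof. by move=> hX hXs; apply/bounded_opscale/bounded_opsub. Qed.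

Lemma adjoint_linear T Ts : is_adjoint ip T Ts ->
  forall a x y, Ts (a *: x + y) = a *: Ts x + Ts y.
Proof.
by move=> hTs a x y; apply: ip_injr => z; rewrite -hTs !ipDr !ipZr !hTs.
Qed.

(* |T^* y|^2 = Re <T T^* y, y> <= M |T^* y| |y| by Cauchy-Schwarz. *)
Lemma adjoint_bounded T Ts :
  bounded_op ip T -> is_adjoint ip T Ts -> bounded_op ip Ts.
Proof.
move=> [_ [M hM]] hTs; split; first exact: adjoint_linear.
exists `|M| => y; have s0 := hnorm_ge0 (Ts y); have r0 := hnorm_ge0 y.
have : hnorm ip (Ts y) ^+ 2 <= hnorm ip (Ts y) * (`|M| * hnorm ip y).
  rewrite sqr_hnorm -hTs mulrCA mulrA; apply: le_trans (Re_ip_le _ _) _.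
  by rewrite ler_wpM2r // (le_trans (hM _)) ?ler_wpM2r ?ler_norm.
have : 0 <= `|M| * hnorm ip y by rewrite mulr_ge0.
move: (_ * hnorm ip y) (hnorm ip (Ts y)) s0 => K s; nra.
Qed.

End HilbertSpace.

Section NormOnOperators.
Variables (R : realType) (V : lmodType R[i]) (ip : V -> V -> R[i]).
Variable N : (V -> V) -> R.
Hypotheses (hH : is_hilbert ip) (hN : is_norm_BH ip N).

Lemma normBH_ge0 X : bounded_op ip X -> 0 <= N X.
Proof.
case: hN => N_eq0 NZ ND hX; have hX' := bounded_opscale hH (-1) hX.
have X_sub_X : opadd X (opscale (-1) X) = (fun=> 0).
  by apply: funext => v; rewrite /opadd /opscale scaleN1r subrr.
have := ND _ _ hX hX'; rewrite (N_eq0 _ (bounded_opadd hH hX hX')).2 //.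
by rewrite NZ // -(rmorphN1 (real_complex R)) cabs_real normrN1; lra.
Qed.

Lemma normBH_ReOp_le X Xs : bounded_op ip X -> bounded_op ip Xs ->
  N (ReOp X Xs) <= 2^-1 * (N X + N Xs).
Proof.
case: hN => _ NZ ND hX hXs; rewrite /ReOp NZ; last exact: bounded_opadd.
rewrite real_complexV2 cabs_real ger0_norm ?invr_ge0 ?ler0n //.
by rewrite ler_wpM2l ?invr_ge0 ?ler0n ?ND.
Qed.

Lemma normBH_ReOp_expi_le_wN T Ts t : bounded_op ip T -> is_adjoint ip T Ts ->
  N (ReOp (opscale (expi t) T) (opscale (expi t)^* Ts)) <= wN N T Ts.
Proof.
move=> hT hTs; have hTs' := adjoint_bounded hH hT hTs.
apply: ub_le_sup; last by exists t.
exists (2^-1 * (N T + N Ts)) => _ [s _ <-]; case: hN => _ NZ _.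
have hsT := bounded_opscale hH (expi s) hT.
have hsTs := bounded_opscale hH (expi s)^* hTs'.
apply: le_trans (normBH_ReOp_le hsT hsTs) _.
by rewrite !NZ // cabs_conj cabs_expi !mul1r.
Qed.

End NormOnOperators.

Section RealAndImaginaryParts.
Variables (R : realType) (V : lmodType R[i]) (ip : V -> V -> R[i]).
Variables (T Ts : V -> V).
Hypotheses (hH : is_hilbert ip) (hT : bounded_op ip T) (hTs : is_adjoint ip T Ts).

(* Every operator below is a combination of T and T^* or of their products of
   length two; computing with coefficients turns each operator identity into
   an identity between complex numbers. *)
Definition lin_TTs (a b : R[i]) : V -> V := fun v => a *: T v + b *: Ts v.

Definition quad_TTs (a b c d : R[i]) : V -> V :=
  fun v => a *: T (T v) + b *: T (Ts v) + c *: Ts (T v) + d *: Ts (Ts v).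

Lemma ReOp_scale_lin_TTs e : ReOp (opscale e T) (opscale e^* Ts) =
  lin_TTs ((2^-1)%:C * e) ((2^-1)%:C * e^*).
Proof.
apply: funext => v.
by rewrite /ReOp /opscale /opadd /lin_TTs real_complexV2 scalerDr !scalerA.
Qed.

Lemma ReOp_lin_TTs : ReOp T Ts = lin_TTs (2^-1)%:C (2^-1)%:C.
Proof.
by apply: funext => v; rewrite /ReOp /opscale /opadd /lin_TTs real_complexV2 scalerDr.
Qed.

Lemma ImOp_lin_TTs : ImOp T Ts = lin_TTs (0 +i* (- 2^-1)) (0 +i* 2^-1).
Proof.
apply: funext => v; rewrite /ImOp /opscale /opsub /lin_TTs invc_2i scalerBr -scaleNr.
by congr (_ + _ *: _); apply: complex_eqE => /=; lra.
Qed.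

Lemma opadd_lin_TTs a b c d :
  opadd (lin_TTs a b) (lin_TTs c d) = lin_TTs (a + c) (b + d).
Proof. by apply: funext => v; rewrite /opadd /lin_TTs !scalerDl addrACA. Qed.

Lemma opsub_lin_TTs a b c d :
  opsub (lin_TTs a b) (lin_TTs c d) = lin_TTs (a - c) (b - d).
Proof. by apply: funext => v; rewrite /opsub /lin_TTs !scalerBl opprD addrACA. Qed.

Lemma opscale_lin_TTs k a b : opscale k (lin_TTs a b) = lin_TTs (k * a) (k * b).
Proof. by apply: funext => v; rewrite /opscale /lin_TTs scalerDr !scalerA. Qed.

Lemma opcomp_lin_TTs a b c d :
  opcomp (lin_TTs a b) (lin_TTs c d) = quad_TTs (a * c) (a * d) (b * c) (b * d).
Proof.
have [linT _] := hT; have linTs := adjoint_linear hH hTs.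
apply: funext => v; rewrite /opcomp /lin_TTs /quad_TTs linT linTs.
by rewrite !(linear_axiomZ linT) !(linear_axiomZ linTs) !scalerDr !scalerA addrA.
Qed.

Lemma opadd_quad_TTs a b c d a' b' c' d' :
  opadd (quad_TTs a b c d) (quad_TTs a' b' c' d') =
  quad_TTs (a + a') (b + b') (c + c') (d + d').
Proof.
apply: funext => v; rewrite /opadd /quad_TTs !scalerDl.
by rewrite addrACA; congr (_ + _); rewrite addrACA; congr (_ + _); rewrite addrACA.
Qed.

Lemma opscale_quad_TTs k a b c d :
  opscale k (quad_TTs a b c d) = quad_TTs (k * a) (k * b) (k * c) (k * d).
Proof. by apply: funext => v; rewrite /opscale /quad_TTs !scalerDr !scalerA. Qed.

Lemma TsT_add_TTs_quad : opadd (opcomp Ts T) (opcomp T Ts) = quad_TTs 0 1 1 0.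
Proof.
apply: funext => v; rewrite /opadd /opcomp /quad_TTs.
by rewrite !scale0r !scale1r add0r addr0 addrC.
Qed.

Variable N : (V -> V) -> R.
Hypotheses (hN : is_norm_BH ip N) (halg : algebra_norm ip N).

Lemma normBH_lin_TTs_expi_le_wN t :
  N (lin_TTs ((2^-1)%:C * expi t) ((2^-1)%:C * (expi t)^*)) <= wN N T Ts.
Proof.
by rewrite -ReOp_scale_lin_TTs; exact (normBH_ReOp_expi_le_wN hH hN t hT hTs).
Qed.

Lemma normBH_ReOp_le_wN : N (ReOp T Ts) <= wN N T Ts.
Proof.
have := normBH_lin_TTs_expi_le_wN 0; rewrite ReOp_lin_TTs /expi cos0 sin0.
by congr (N _ <= _); congr lin_TTs; apply: complex_eqE => /=; lra.
Qed.

Lemma normBH_ImOp_le_wN : N (ImOp T Ts) <= wN N T Ts.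
Proof.
have := normBH_lin_TTs_expi_le_wN (- (pi / 2)).
rewrite ImOp_lin_TTs /expi cosN sinN cos_pihalf sin_pihalf.
by congr (N _ <= _); congr lin_TTs; apply: complex_eqE => /=; lra.
Qed.

Let hTs' : bounded_op ip Ts := adjoint_bounded hH hT hTs.
Let hA : bounded_op ip (ReOp T Ts) := bounded_ReOp hH hT hTs'.
Let hB : bounded_op ip (ImOp T Ts) := bounded_ImOp hH hT hTs'.

Lemma normBH_ReOp_add_ImOp_le :
  N (opadd (ReOp T Ts) (ImOp T Ts)) ^+ 2 <= 2 * wN N T Ts ^+ 2.
Proof.
case: hN => _ NZ _; have hAB := bounded_opadd hH hA hB.
apply: cos_pi4_mul_le; first exact: normBH_ge0 hH hN _ hAB.
rewrite -[cos _](gtr0_norm (cos_pi4_gt0 R)) -cabs_real -NZ //.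
have := normBH_lin_TTs_expi_le_wN (- (pi / 4)).
rewrite ReOp_lin_TTs ImOp_lin_TTs opadd_lin_TTs opscale_lin_TTs.
rewrite /expi cosN sinN sin_pi4.
by congr (N _ <= _); congr lin_TTs; apply: complex_eqE => /=; lra.
Qed.

Lemma normBH_ReOp_sub_ImOp_le :
  N (opsub (ReOp T Ts) (ImOp T Ts)) ^+ 2 <= 2 * wN N T Ts ^+ 2.
Proof.
case: hN => _ NZ _; have hAB := bounded_opsub hH hA hB.
apply: cos_pi4_mul_le; first exact: normBH_ge0 hH hN _ hAB.
rewrite -[cos _](gtr0_norm (cos_pi4_gt0 R)) -cabs_real -NZ //.
have := normBH_lin_TTs_expi_le_wN (pi / 4).
rewrite ReOp_lin_TTs ImOp_lin_TTs opsub_lin_TTs opscale_lin_TTs /expi sin_pi4.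
by congr (N _ <= _); congr lin_TTs; apply: complex_eqE => /=; lra.
Qed.

(* T^*T + TT^* = 2 (A^2 + B^2) for A = Re T and B = Im T. *)
Lemma normBH_TsT_add_TTs_le : N (opadd (opcomp Ts T) (opcomp T Ts)) <=
  2 * (N (ReOp T Ts) ^+ 2 + N (ImOp T Ts) ^+ 2).
Proof.
case: hN => _ NZ ND.
have hAA := bounded_opcomp hA hA; have hBB := bounded_opcomp hB hB.
have -> : opadd (opcomp Ts T) (opcomp T Ts) = opscale (2 : R)%:C
    (opadd (opcomp (ReOp T Ts) (ReOp T Ts)) (opcomp (ImOp T Ts) (ImOp T Ts))).
  rewrite TsT_add_TTs_quad ReOp_lin_TTs ImOp_lin_TTs !opcomp_lin_TTs.
  rewrite opadd_quad_TTs opscale_quad_TTs.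
  by congr quad_TTs; apply: complex_eqE => /=; lra.
rewrite NZ; last exact (bounded_opadd hH hAA hBB).
rewrite cabs_real ger0_norm // ler_wpM2l // !expr2.
exact: le_trans (ND _ _ hAA hBB) (lerD (halg hA hA) (halg hB hB)).
Qed.

End RealAndImaginaryParts.

Theorem corollary2p16 (R : realType) (V : lmodType R[i]) (ip : V -> V -> R[i])
  (hH : is_hilbert ip) (N : (V -> V) -> R)
  (hN : is_norm_BH ip N) (halg : algebra_norm ip N) (hsa : selfadjoint_norm ip N)
  (T Ts : V -> V) (hT : bounded_op ip T) (hTs : is_adjoint ip T Ts) :
  16^-1 * N (opadd (opcomp Ts T) (opcomp T Ts))
  + 2^-1 * Num.max (N (ReOp T Ts)) (N (ImOp T Ts))
      * `| N (opadd (ReOp T Ts) (ImOp T Ts)) - N (opsub (ReOp T Ts) (ImOp T Ts)) |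
  <= wN N T Ts ^+ 2.
Proof.
have hTs' := adjoint_bounded hH hT hTs.
have hA := bounded_ReOp hH hT hTs'; have hB := bounded_ImOp hH hT hTs'.
have a_le := normBH_ReOp_le_wN hH hT hTs hN.
have b_le := normBH_ImOp_le_wN hH hT hTs hN.
have p_le := normBH_ReOp_add_ImOp_le hH hT hTs hN.
have m_le := normBH_ReOp_sub_ImOp_le hH hT hTs hN.
have S_le := normBH_TsT_add_TTs_le hH hT hTs hN halg.
(* Fixing R avoids a very slow unification of realType with realFieldType. *)
apply: (@sixteenth_add_half_max_dist_le R) S_le => //.
- by rewrite (normBH_ge0 hH hN hA) a_le.
- by rewrite (normBH_ge0 hH hN hB) b_le.
- exact: normBH_ge0 hH hN _ (bounded_opadd hH hA hB).
- exact: normBH_ge0 hH hN _ (bounded_opsub hH hA hB).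
Qed.
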